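(* Let $G=(V,E)$ be a finite simple graph with maximum degree $\Delta$, let $w\in(0,1)$ and $M\subseteq E$. Then for all $A\in\mathcal W=\mathcal C_0\cup\mathcal C_2$ and all edges $e=\{u,v\}\in E$ with $A\oplus e\in\mathcal W$, \[ \Psi(A)\,\lambda(A)\,P(A,A\oplus e)\;\ge\;\frac{w^{|(A\oplus M)\cup e|}}{2\Delta}\;\ge\;\frac{w^{|(A\cup e)\oplus M|}}{2\Delta w^{-1}} . \]
   Context: Subgraphs of $G$ are identified with edge subsets $A\subseteq E$; $\oplus$ denotes symmetric difference, $(A\oplus M)\cup e$ means $(A\oplus M)\cup\{e\}$, $d(u)$ is the degree of $u$ in $G$, and $\partial A$ is the set of vertices of odd degree in $(V,A)$. $\mathcal C_k=\{A\subseteq E:|\partial A|=k\}$. $\lambda(A)=w^{|A\oplus M|}$. $\Psi(A)=|V|$ if $A\in\mathcal C_0$ and $\Psi(A)=2$ if $A\in\mathcal C_2$. $P$ is the transition matrix of the lazy worm process: for $A\in\mathcal W$ and $e=uv\in E$ with $A\oplus e\in\mathcal W$, (i) if $A\in\mathcal C_0$: $P(A,A\oplus e)=w^{\mathbf 1[e\notin A\oplus M]}\frac{1}{2|V|}\bigl(\frac1{d(u)}+\frac1{d(v)}\bigr)$; (ii) if $A\in\mathcal C_2$ and $A\oplus e\in\mathcal C_0$: $P(A,A\oplus e)=w^{\mathbf 1[e\notin A\oplus M]}\frac14\bigl(\frac1{d(u)}+\frac1{d(v)}\bigr)$; (iii) if $A\in\mathcal C_2$, $A\oplus e\in\mathcal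 C_2$ and $u\in\partial A$: $P(A,A\oplus e)=\min\!\bigl(\frac{d(u)}{d(v)}w^{\mathbf 1[e\notin A\oplus M]-\mathbf 1[e\in A\oplus M]},1\bigr)\frac{1}{4d(u)}$. *)

From HB Require Import structures.
From mathcomp Require Import all_boot all_order all_algebra.
Set Implicit Arguments. Unset Strict Implicit. Unset Printing Implicit Defensive.
Import Order.TTheory GRing.Theory Num.Theory.
Local Open Scope ring_scope.

(* An edge {u,v} is the
   2-element set [set u; v]; subgraphs are sets of edges. *)

Definition edges (T : finType) (adj : rel T) : {set {set T}} :=
  [set [set p.1; p.2] | p in [set p : T * T | adj p.1 p.2]].

Definition deg (T : finType) (adj : rel T) (u : T) : nat :=
  #|[set v | adj u v]|.

Definition maxdeg (T : finType) (adj : rel T) : nat :=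
  (\max_(u : T) deg adj u)%N.

Definition symdiff (T : finType) (A B : {set T}) : {set T} :=
  (A :\: B) :|: (B :\: A).

Definition boundary (T : finType) (A : {set {set T}}) : {set T} :=
  [set x | odd #|[set f in A | x \in f]|].

Definition inC (T : finType) (k : nat) (A : {set {set T}}) : bool :=
  #|boundary A| == k.

Definition inW (T : finType) (A : {set {set T}}) : bool :=
  inC 0 A || inC 2 A.

Definition Psi (R : numDomainType) (T : finType) (A : {set {set T}}) : R :=
  if inC 0 A then #|T|%:R else 2.

Definition lam (R : numDomainType) (T : finType) (w : R)
  (M A : {set {set T}}) : R := w ^+ #|symdiff A M|.

Definition Pworm (R : numFieldType) (T : finType) (adj : rel T) (w : R)
  (M A : {set {set T}}) (u v : T) : R :=
  let f := [set u; v] in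
  let AM := symdiff A M in
  let du : R := (deg adj u)%:R in
  let dv : R := (deg adj v)%:R in
  let wexp : R := w ^+ (f \notin AM) in
  if inC 0 A then
    wexp * (2 * #|T|%:R)^-1 * (du^-1 + dv^-1)
  else if inC 0 (symdiff A [set f]) then
    wexp * 4^-1 * (du^-1 + dv^-1)
  else if u \in boundary A then
    Num.min (du / dv * (w ^+ (f \notin AM) / w ^+ (f \in AM))) 1 * (4 * du)^-1
  else
    Num.min (dv / du * (w ^+ (f \notin AM) / w ^+ (f \in AM))) 1 * (4 * dv)^-1.

(* Write W := w^|A (+) M| and b := [e \notin A (+) M], so that the middle term is
   W w^b / (2 Delta).  As lambda(A) = W, it suffices that Psi(A) P(A, A (+) e) >= w^b / (2 Delta),
   and this holds in each of the four branches defining P, using only 1 <= d(u), d(v) <= Delta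
   and 0 < w <= 1.
   For the right inequality, adding e to A changes A (+) M only at e, so
   |(A (+) M) u e| <= |(A u e) (+) M| + 1. *)

From HB Require Import structures.
From mathcomp Require Import all_boot all_order all_algebra.
From mathcomp Require Import ring lra.
Set Implicit Arguments. Unset Strict Implicit. Unset Printing Implicit Defensive.
Import Order.TTheory GRing.Theory Num.Theory.
Local Open Scope ring_scope.

Section TransitionBounds.

Variables (R : realFieldType) (w D d1 d2 : R).
Hypotheses (w_gt0 : 0 < w) (w_le1 : w <= 1).
Hypotheses (d1_gt0 : 0 < d1) (d1_leD : d1 <= D) (d2_gt0 : 0 < d2) (d2_leD : d2 <= D).

Lemma invr_double_le (d : R) : 0 < d -> d <= D -> (2 * D)^-1 <= (2 * d)^-1.
Proof. by move=> d_gt0 d_leD; rewrite lef_pV2 ?posrE; lra. Qed.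

Lemma invr_double_le_mean : (2 * D)^-1 <= (d1^-1 + d2^-1) / 2.
Proof.
have := invr_double_le d1_gt0 d1_leD; rewrite invfM mulrC.
have : 0 <= d2^-1 by rewrite invr_ge0 ltW.
lra.
Qed.

Lemma symmetric_step_ge (n : R) (b : bool) : 0 < n ->
  w ^+ b / (2 * D) <= n * (w ^+ b * (2 * n)^-1 * (d1^-1 + d2^-1)).
Proof.
move=> n_gt0.
have -> : n * (w ^+ b * (2 * n)^-1 * (d1^-1 + d2^-1))
          = w ^+ b * ((d1^-1 + d2^-1) / 2) by field; rewrite !gt_eqF.
by rewrite ler_pM2l ?exprn_gt0 ?invr_double_le_mean.
Qed.

Lemma metropolis_step_ge (b : bool) :
  w ^+ b / (2 * D) <= 2 * (Num.min (d1 / d2 * (w ^+ b / w ^+ (~~ b))) 1 * (4 * d1)^-1).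
Proof.
have wb_gt0 : 0 < w ^+ b by rewrite exprn_gt0.
have wnb_gt0 : 0 < w ^+ (~~ b) by rewrite exprn_gt0.
have invD_ge0 : 0 <= (2 * D)^-1.
  by rewrite invr_ge0 mulr_ge0 // ltW // (lt_le_trans d1_gt0).
have [_|_] := leP (d1 / d2 * (w ^+ b / w ^+ (~~ b))) 1.
- have -> : 2 * (d1 / d2 * (w ^+ b / w ^+ (~~ b)) * (4 * d1)^-1)
            = w ^+ b / w ^+ (~~ b) * (2 * d2)^-1 by field; rewrite !gt_eqF.
  apply: ler_pM => //; first exact: ltW.
  + by rewrite ler_pdivlMr // ger_pMr // exprn_ile1 // ltW.
  + exact: invr_double_le.
- have -> : 2 * (1 * (4 * d1)^-1) = (2 * d1)^-1 by field; rewrite gt_eqF.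
  rewrite -[leRHS]mul1r; apply: ler_pM => //; first exact: ltW.
  + by rewrite exprn_ile1 // ltW.
  + exact: invr_double_le.
Qed.

End TransitionBounds.

Lemma deg_gt0 (T : finType) (adj : rel T) (u v : T) : adj u v -> (0 < deg adj u)%N.
Proof. by move=> uv; apply/card_gt0P; exists v; rewrite inE. Qed.

Lemma deg_le_maxdeg (T : finType) (adj : rel T) (u : T) : (deg adj u <= maxdeg adj)%N.
Proof. exact: leq_bigmax. Qed.

Lemma card_symdiffU1 (T : finType) (A M : {set T}) (x : T) :
  (#|symdiff A M :|: [set x]| <= #|symdiff (A :|: [set x]) M|.+1)%N.
Proof.
have sub : symdiff A M :|: [set x] \subset x |: symdiff (A :|: [set x]) M.
  apply/subsetP => y; rewrite /symdiff !inE.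
  by case: (y \in A); case: (y \in M); case: (y == x).
apply: leq_trans (subset_leq_card sub) _.
by rewrite cardsU1 -addn1 addnC leq_add2l leq_b1.
Qed.

Lemma Psi_Pworm_ge (R : realFieldType) (T : finType) (adj : rel T)
    (w : R) (M A : {set {set T}}) (u v : T) :
  symmetric adj -> 0 < w -> w <= 1 -> adj u v ->
  w ^+ ([set u; v] \notin symdiff A M) / (2 * (maxdeg adj)%:R)
    <= Psi R A * Pworm adj w M A u v.
Proof.
move=> adj_sym w_gt0 w_le1 uv.
have vu : adj v u by rewrite adj_sym.
have du_gt0 : 0 < (deg adj u)%:R :> R by rewrite ltr0n (deg_gt0 uv).
have dv_gt0 : 0 < (deg adj v)%:R :> R by rewrite ltr0n (deg_gt0 vu).
have du_le : (deg adj u)%:R <= (maxdeg adj)%:R :> R by rewrite ler_nat deg_le_maxdeg.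
have dv_le : (deg adj v)%:R <= (maxdeg adj)%:R :> R by rewrite ler_nat deg_le_maxdeg.
have V_gt0 : 0 < #|T|%:R :> R by rewrite ltr0n; apply/card_gt0P; exists u.
rewrite /Psi /Pworm; set b := _ \notin _; rewrite -[[set u; v] \in _]negbK -/b.
case: ifP => _; first exact: symmetric_step_ge.
case: ifP => _.
  by rewrite (_ : 4 = 2 * 2); [exact: symmetric_step_ge | rewrite -natrM].
by case: ifP => _; apply: metropolis_step_ge.
Qed.

Theorem lemma1 (R : realFieldType) (T : finType) (adj : rel T)
  (adj_sym : symmetric adj) (adj_irr : irreflexive adj)
  (w : R) (w_gt0 : 0 < w) (w_lt1 : w < 1)
  (M : {set {set T}}) (M_sub : M \subset edges adj)
  (A : {set {set T}}) (A_sub : A \subset edges adj) (A_W : inW A)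
  (u v : T) (uv : adj u v) (Ae_W : inW (symdiff A [set [set u; v]])) :
  w ^+ #|symdiff A M :|: [set [set u; v]]| / (2 * (maxdeg adj)%:R)
    <= Psi R A * lam w M A * Pworm adj w M A u v
  /\
  w ^+ #|symdiff (A :|: [set [set u; v]]) M| / (2 * (maxdeg adj)%:R * w^-1)
    <= w ^+ #|symdiff A M :|: [set [set u; v]]| / (2 * (maxdeg adj)%:R).
Proof.
have w_le1 : w <= 1 by rewrite ltW.
have D_gt0 : 0 < (maxdeg adj)%:R :> R
  by rewrite ltr0n (leq_trans (deg_gt0 uv) (deg_le_maxdeg _ _)).
split.
  rewrite setUC cardsU1 exprD /lam mulrAC [in leRHS]mulrAC ler_pM2r ?exprn_gt0 //.
  exact: Psi_Pworm_ge.
rewrite invfM invrK mulrCA -exprSr mulrC ler_pM2r ?invr_gt0 ?mulr_gt0 //.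
apply: (ler_wiXn2l (ltW w_gt0) w_le1); exact: card_symdiffU1.
Qed.
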